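(* Let $\{a(n)\}_{n\in\mathbb{N}}$ be a sequence of non-negative numbers with $\sum_{n=1}^{\infty}a(n)\le 1$. Then for every $\alpha>1$ there exist $\varepsilon(\alpha)>0$ and $\nu(\alpha)\in\mathbb{N}$ such that for every integer $N\ge\nu(\alpha)$ there is a positive integer $\ell_{\alpha,N}<N^{\alpha}$ satisfying $\sum_{n=1}^{N}a(n\cdot\ell_{\alpha,N})<\frac{1}{N^{1+\varepsilon(\alpha)}}$. *)

From Stdlib Require Import Reals.
Open Scope R_scope.

Definition sum1 (f : nat -> R) (N : nat) : R := sum_f 1 N f.

(* For primes N < p <= K the products n p with 1 <= n <= N are pairwise distinct,
   so summing sum_{n <= N} a(n p) over all these primes gives at most
   sum_{m <= N K} a(m) <= 1, and some prime p beats the average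
   1 / #{primes in (N, K]}.  With K close to N^alpha, Chebyshev's bound
   pi(2k) >= k ln 2 / ln (2k), which follows from 2^k <= C(2k, k) and
   p^(v_p C(2k, k)) <= 2k, provides more than N^(1 + eps) such primes for
   eps = (alpha - 1) / 4 and N large. *)

From Stdlib Require Import Reals Lra.
From mathcomp Require Import all_boot order zify ssralg ssrnum archimedean Rstruct.
Set Implicit Arguments. Unset Strict Implicit.
Import Order.TTheory GRing.Theory Num.Theory Num.Def.

Local Open Scope nat_scope.

Definition prime_count n := count prime (iota 0 n.+1).

Definition primes_between N K := [seq p <- iota N.+1 (K - N) | prime p].

Lemma exp2_le_bin_double k : 2 ^ k <= 'C(k.*2, k).
Proof.
elim: k => [|k IHk] //; rewrite doubleS binS expnS.
have := leq_bin2l k (leqnSn k.*2); rewrite binS; lia.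
Qed.

Lemma sum_indicator_le t B : \sum_(1 <= i < B) (i <= t : nat) <= t.
Proof.
case: B => [|B]; first by rewrite big_geq.
suff -> : \sum_(1 <= i < B.+1) (i <= t : nat) = minn B t by apply: geq_minr.
elim: B => [|B IHB]; first by rewrite big_geq // min0n.
by rewrite big_nat_recr //= IHB; case: (leqP B.+1 t) => /=; lia.
Qed.

Lemma logn_fact_upto p n B : prime p -> n < B ->
  logn p n`! = \sum_(1 <= i < B) n %/ p ^ i.
Proof.
move=> p_pr ltnB; rewrite logn_fact // [RHS](big_cat_nat (n := n.+1)) //=.
rewrite [X in _ + X]big1_seq ?addn0 // => i /andP[_].
rewrite mem_index_iota => /andP[lt_n_i _]; apply: divn_small.
by have := ltn_expl i (prime_gt1 p_pr); lia.
Qed.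

(* Legendre's formula: each term [2k %/ p^i - 2 (k %/ p^i)] is at most 1, and it
   vanishes once [p^i > 2k]. *)
Lemma logn_bin_double_le p k : prime p -> logn p 'C(k.*2, k) <= trunc_log p k.*2.
Proof.
move=> p_pr; set n := k.*2; set t := trunc_log p n.
have le_k_n : k <= n by rewrite /n -addnn leq_addr.
have := bin_fact le_k_n; rewrite /n -addnn addnK addnn -/n => fact_n.
have lognE : logn p n`! = logn p 'C(n, k) + (logn p k`! + logn p k`!).
  by rewrite -fact_n !lognM ?muln_gt0 ?fact_gt0 ?bin_gt0.
rewrite !(logn_fact_upto (B := n.+1)) // in lognE.
have le_terms : \sum_(1 <= i < n.+1) n %/ p ^ i <=
    \sum_(1 <= i < n.+1) (k %/ p ^ i + k %/ p ^ i + (i <= t : nat)).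
  apply: leq_sum => i _; have p_i_gt0 : 0 < p ^ i by rewrite expn_gt0 prime_gt0.
  case: (leqP (p ^ i) n) => [le_pi_n | lt_n_pi]; last by rewrite divn_small.
  have -> : i <= t by apply: trunc_log_max => //; apply: prime_gt1.
  by rewrite /n -addnn divnD //; case: (p ^ i <= _); lia.
rewrite !big_split /= in le_terms.
have := sum_indicator_le t n.+1; lia.
Qed.

Lemma exp2_le_prime_count k : 0 < k -> 2 ^ k <= k.*2 ^ prime_count k.*2.
Proof.
move=> k_gt0; set n := k.*2; have n_gt0 : 0 < n by rewrite /n -addnn; lia.
have C_gt0 : 0 < 'C(n, k) by rewrite bin_gt0 /n -addnn leq_addr.
apply: leq_trans (exp2_le_bin_double k) _.
rewrite -/n {1}(prod_prime_decomp C_gt0) prime_decompE big_map /=.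
have factor_le : forall p, p \in primes 'C(n, k) -> p ^ logn p 'C(n, k) <= n.
  move=> p; rewrite mem_primes => /andP[p_pr _].
  apply: leq_trans (trunc_logP (prime_gt1 p_pr) n_gt0).
  by rewrite leq_pexp2l ?prime_gt0 // logn_bin_double_le.
apply: (@leq_trans (n ^ size (primes 'C(n, k)))).
  rewrite -iter_muln_1 -count_predT -big_const_seq big_seq [X in _ <= X]big_seq.
  by apply: leq_prod => p /factor_le.
rewrite leq_pexp2l // /prime_count -size_filter.
apply: uniq_leq_size; first exact: primes_uniq.
move=> p p_C; rewrite mem_filter mem_iota /=.
have := p_C; rewrite mem_primes => /andP[p_pr _]; rewrite p_pr /=.
have := factor_le p p_C; rewrite -logn_gt0 in p_C.
have : p <= p ^ logn p 'C(n, k) by rewrite -{1}(expn1 p) leq_pexp2l // prime_gt0.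
by lia.
Qed.

Lemma prime_count_le_primes_between N K :
  prime_count K <= size (primes_between N K) + N.+1.
Proof.
rewrite /prime_count /primes_between size_filter.
have [le_N_K | lt_K_N] := leqP N K; last first.
  by apply: leq_trans (count_size _ _) _; rewrite size_iota; lia.
have -> : K.+1 = N.+1 + (K - N) by lia.
rewrite iotaD count_cat add0n addnC leq_add2l.
by rewrite -{2}(size_iota 0 N.+1) count_size.
Qed.

Lemma mem_primes_between N K p :
  (p \in primes_between N K) = prime p && (N < p <= K).
Proof. by rewrite mem_filter mem_iota; case: prime => //=; apply/idP/idP; lia. Qed.

Lemma uniq_primes_between N K : uniq (primes_between N K).
Proof. exact/filter_uniq/iota_uniq. Qed.

Lemma mul_prime_inj p q m n : prime p -> prime q -> 0 < m < p ->
  n * p = m * q -> p = q /\ n = m.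
Proof.
move=> p_pr q_pr m_range eq_nm.
have : p %| m * q by rewrite -eq_nm dvdn_mull.
rewrite Euclid_dvdM // => /orP[p_dvd_m | ].
  by have := dvdn_leq (_ : 0 < m) p_dvd_m; lia.
rewrite dvdn_prime2 // => /eqP p_eq_q; split => //; subst q.
by apply/eqP; rewrite -(eqn_pmul2r (prime_gt0 p_pr)) eq_nm.
Qed.

Local Open Scope ring_scope.

Lemma sum_sub_uniq_le (R : numDomainType) (T : eqType) (s t : seq T) (F : T -> R) :
  {in t, forall x, 0 <= F x} -> uniq s -> uniq t -> {subset s <= t} ->
  \sum_(x <- s) F x <= \sum_(x <- t) F x.
Proof.
move=> F_ge0 s_uniq t_uniq s_sub_t.
rewrite [X in _ <= X](bigID (mem s)) /= -[X in X <= _]addr0.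
have -> : \sum_(x <- t | x \in s) F x = \sum_(x <- s) F x.
  rewrite -big_filter; apply/perm_big/uniq_perm => [||x]; rewrite ?filter_uniq //.
  by rewrite mem_filter; case: (boolP (x \in s)) => // /s_sub_t.
by rewrite lerD2l big_seq_cond sumr_ge0 // => x /andP[/F_ge0].
Qed.

Lemma sum_multiples_of_primes_le (R : numDomainType) (a : nat -> R) N K P :
  (forall m, (0 < m)%N -> 0 <= a m) -> uniq P ->
  {in P, forall p, prime p && (N < p <= K)%N} ->
  \sum_(p <- P) \sum_(1 <= n < N.+1) a (n * p)%N <= \sum_(1 <= m < (N * K).+1) a m.
Proof.
move=> a_ge0 P_uniq P_range.
rewrite -(big_allpairs_dep (h := fun p n => (n * p)%N)).
apply: sum_sub_uniq_le; rewrite ?iota_uniq //.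
- by move=> m; rewrite mem_index_iota => /andP[/a_ge0].
- apply: allpairs_uniq; rewrite ?iota_uniq //.
  move=> [p n] [q m] /allpairsP[[p' n'] /= [pP nN [-> ->]]].
  move=> /allpairsP[[q' m'] /= [qP mN [-> ->]]] /= eq_np_mq.
  have /andP[p_pr p_range] := P_range p' pP; have /andP[q_pr _] := P_range q' qP.
  have m_range : (0 < m' < p')%N by move: mN; rewrite mem_index_iota; lia.
  by have [-> ->] := mul_prime_inj p_pr q_pr m_range eq_np_mq.
- move=> _ /allpairsP[[p n] /= [pP nN ->]].
  have /andP[p_pr p_range] := P_range p pP; move: nN; rewrite !mem_index_iota.
  move=> n_range; have := prime_gt0 p_pr.
  have : (n * p <= N * K)%N by apply: leq_mul; lia.
  by rewrite muln_gt0; lia.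
Qed.

Lemma has_lt_of_sum_lt (R : realDomainType) (T : eqType) (s : seq T) (F : T -> R) c :
  \sum_(x <- s) F x < (size s)%:R * c -> exists2 x, x \in s & F x < c.
Proof.
case: (boolP (has (fun x => F x < c) s)) => [/hasP[x] | /hasPn ge_c]; first by exists x.
rewrite ltNge => /negP[]; rewrite mulr_natl -iter_addr_0 -count_predT.
rewrite -big_const_seq big_seq [X in _ <= X]big_seq.
by apply: ler_sum => x /ge_c; rewrite leNgt.
Qed.

Lemma sum_f1E (f : nat -> R) N : (0 < N)%N -> sum_f 1 N f = \sum_(1 <= n < N.+1) f n.
Proof.
case: N => // N _; rewrite /sum_f sum_f_R0E big_add1 /= Nat.sub_0_r.
by apply: eq_bigr => n _; rewrite Nat.add_1_r.
Qed.

Local Close Scope ring_scope.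
Local Open Scope R_scope.

Lemma INR_double k : INR k.*2 = 2 * INR k.
Proof. by rewrite -addnn plus_INR; ring. Qed.

Lemma INR_expn m n : INR (m ^ n) = INR m ^ n.
Proof. by rewrite !INRE natrX RpowE. Qed.

Lemma ln_le x y : 0 < x -> x <= y -> ln x <= ln y.
Proof. by move=> x_gt0 [/(ln_increasing _ _ x_gt0)/Rlt_le | ->]; [| apply: Rle_refl]. Qed.

Lemma ln_prime_count_double_ge k : (0 < k)%N ->
  INR k * ln 2 <= INR (prime_count k.*2) * ln (INR k.*2).
Proof.
move=> k_gt0; have k2_gt0 : 0 < INR k.*2.
  by rewrite INR_double; have := lt_0_INR k (ssrnat.leP k_gt0); lra.
have := le_INR _ _ (ssrnat.leP (exp2_le_prime_count k_gt0)); rewrite !INR_expn.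
rewrite -!ln_pow //; last by rewrite /= ; lra.
by apply: ln_le; apply: pow_lt; rewrite /=; lra.
Qed.

Lemma ln_lt_Rpower x d : d * ln x < Rpower x d.
Proof. by rewrite /Rpower; have := exp_ineq1_le (d * ln x); lra. Qed.

Lemma prime_count_double_ge_Rpower a d x k : (0 < k)%N -> 0 <= a -> 0 <= d ->
  INR k.*2 < Rpower x a ->
  d * (INR k * ln 2) <= INR (prime_count k.*2) * a * Rpower x d.
Proof.
move=> k_gt0 a_ge0 d_ge0 k2_lt; set pi := INR (prime_count k.*2).
have pi_ge0 : 0 <= pi by apply: pos_INR.
have k2_gt0 : 0 < INR k.*2.
  by rewrite INR_double; have := lt_0_INR k (ssrnat.leP k_gt0); lra.
have ln_k2_lt : ln (INR k.*2) < a * ln x.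
  by rewrite -ln_Rpower; apply: ln_increasing.
have := ln_prime_count_double_ge k_gt0; rewrite -/pi => cheb.
have : pi * ln (INR k.*2) <= pi * (a * ln x) by apply: Rmult_le_compat_l; lra.
have : pi * a * (d * ln x) <= pi * a * Rpower x d.
  by apply: Rmult_le_compat_l; [nra | apply: Rlt_le; apply: ln_lt_Rpower].
nra.
Qed.

(* With [u = x^d]: [prime_count_double_ge_Rpower] bounds [d k ln 2] by [pi (1 + 4d) u], while
   [2k > x u^4 - 3 >= C x u^2 - 3]; the constant [C] is chosen so that the two
   bounds are incompatible unless [pi > 3 x u >= x u + x + 1]. *)
Lemma prime_count_double_gt d x k : 0 < d -> 1 <= x ->
  3 + 6 * (1 + 4 * d) / (d * ln 2) <= Rpower x (2 * d) ->
  Rpower x (1 + 4 * d) - 3 < INR k.*2 < Rpower x (1 + 4 * d) ->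
  Rpower x (1 + d) + x + 1 < INR (prime_count k.*2).
Proof.
set a := 1 + 4 * d; set C := 3 + 6 * a / (d * ln 2); set u := Rpower x d.
move=> d_gt0 x_ge1 large_x [k2_gt k2_lt].
have a_gt0 : 0 < a by rewrite /a; lra.
have L_gt0 : 0 < ln 2 by have := ln_lt_2; lra.
have dL_gt0 : 0 < d * ln 2 by nra.
have C_ge3 : 3 <= C.
  have : 0 < 6 * a / (d * ln 2) by apply: Rdiv_lt_0_compat; lra.
  by rewrite /C; lra.
have dLC : d * ln 2 * C = 3 * d * ln 2 + 6 * a by rewrite /C; field; lra.
have Rpower_x2d : Rpower x (2 * d) = u * u by rewrite -Rpower_plus; f_equal; ring.
have Rpower_xa : Rpower x a = x * (u * u) * (u * u).
  by rewrite -Rpower_x2d -{2}(Rpower_1 x) -?Rpower_plus /a; [f_equal; ring | lra].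
rewrite Rpower_plus Rpower_1 -/u; last by lra.
rewrite Rpower_x2d in large_x; rewrite Rpower_xa in k2_gt.
set w := x * (u * u) in k2_gt.
have u_ge1 : 1 <= u by have := exp_pos (d * ln x); rewrite -/(Rpower x d) -/u; nra.
have w_ge3 : 3 <= w by rewrite /w; nra.
have k_gt0 : (0 < k)%N.
  by apply/ssrnat.ltP/INR_lt; rewrite INR_double in k2_gt; simpl; nra.
have := prime_count_double_ge_Rpower k_gt0 (Rlt_le _ _ a_gt0) (Rlt_le _ _ d_gt0) k2_lt.
set pi := INR (prime_count k.*2); rewrite -/u => cheb.
apply: Rnot_le_lt => pi_small.
have pi_le : pi <= 3 * (x * u) by nra.
have au_ge0 : 0 <= a * u by nra.
have := Rmult_le_compat_r _ _ _ au_ge0 pi_le.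
have -> : 3 * (x * u) * (a * u) = 3 * a * w by rewrite /w; ring.
have : d * ln 2 * C * w <= d * ln 2 * (u * u) * w.
  by apply: Rmult_le_compat_r; [lra | apply: Rmult_le_compat_l; lra].
have : 3 * d * ln 2 <= 3 * d * ln 2 * w by nra.
rewrite INR_double in k2_gt; nra.
Qed.
Lemma Rpower_gt_eventually C d : 0 < C -> 0 < d ->
  exists nu : nat, forall N : nat, (nu <= N)%N -> C < Rpower (INR N) d.
Proof.
move=> C_gt0 d_gt0; exists (truncn (Rpower C (/ d))).+1 => N le_nu_N.
have root_lt : Rpower C (/ d) < INR N.
  apply: (Rlt_le_trans _ _ _ _ (le_INR _ _ (ssrnat.leP le_nu_N))).
  by rewrite INRE; apply/RltP/truncnS_gt.
rewrite -{1}(Rpower_1 C) // -(Rinv_l d); last by lra.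
by rewrite -Rpower_mult; apply: Rlt_Rpower_l => //; split => //; apply: exp_pos.
Qed.

Lemma exists_double_between y : 1 <= y -> exists k : nat, y - 3 < INR k.*2 < y.
Proof.
move=> y_ge1; suff [k [le_k lt_k]] : exists k : nat, INR k <= (y - 1) / 2 < INR k + 1.
  by exists k; rewrite INR_double; lra.
have : 0 <= (y - 1) / 2 by lra.
move: ((y - 1) / 2) => z /RleP/truncn_itv/andP[/RleP le_k /RltP lt_k].
by exists (truncn z); rewrite -!INRE S_INR in le_k lt_k.
Qed.

Lemma many_primes_between alpha : 1 < alpha ->
  exists (eps : R) (nu : nat), 0 < eps /\ forall N : nat, (nu <= N)%N -> (0 < N)%N ->
    exists K : nat, INR K < Rpower (INR N) alpha /\
      Rpower (INR N) (1 + eps) < INR (size (primes_between N K)).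
Proof.
move=> alpha_gt1; set d := (alpha - 1) / 4.
have d_gt0 : 0 < d by rewrite /d; lra.
have alphaE : alpha = 1 + 4 * d by rewrite /d; field.
set C := 3 + 6 * (1 + 4 * d) / (d * ln 2).
have C_gt0 : 0 < C.
  have : 0 < 6 * (1 + 4 * d) / (d * ln 2).
    by apply: Rdiv_lt_0_compat; have := ln_lt_2; nra.
  by rewrite /C; lra.
have [nu large] := Rpower_gt_eventually C_gt0 (Rmult_lt_0_compat _ _ Rlt_0_2 d_gt0).
exists d, nu; split => // N le_nu_N N_gt0.
have N_ge1 : 1 <= INR N by apply: (le_INR 1); apply/ssrnat.leP.
have X_ge1 : 1 <= Rpower (INR N) alpha.
  by rewrite -(Rpower_O (INR N)); [apply: Rle_Rpower; lra | lra].
have [k k2_between] := exists_double_between X_ge1.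
rewrite alphaE in k2_between.
have := prime_count_double_gt d_gt0 N_ge1 (Rlt_le _ _ (large N le_nu_N)) k2_between.
have count_le : INR (prime_count k.*2) <= INR (size (primes_between N k.*2)) + (INR N + 1).
  rewrite -S_INR -plus_INR; apply/le_INR/ssrnat.leP.
  exact: prime_count_le_primes_between.
by rewrite alphaE => count_gt; exists k.*2; split; lra.
Qed.

Lemma sum_upto_le_one (a : nat -> R) M :
  (forall M : nat, Peano.le 1 M -> sum_f 1 M a <= 1) ->
  (\sum_(1 <= m < M.+1) a m <= 1)%R.
Proof.
move=> a_sum; case: M => [|M]; first by rewrite big_geq // ler01.
by apply/RleP; rewrite -sum_f1E //; apply: a_sum; lia.
Qed.

Theorem lemma9 (a : nat -> R)
  (Ha_nonneg : forall n : nat, Peano.le 1 n -> 0 <= a n)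
  (Ha_sum : forall M : nat, Peano.le 1 M -> sum_f 1 M a <= 1) :
  forall alpha : R, 1 < alpha ->
  exists (eps : R) (nu : nat), 0 < eps /\
    forall N : nat, Peano.le nu N -> Peano.le 1 N ->
    exists l : nat, Peano.le 1 l /\ INR l < Rpower (INR N) alpha /\
      sum_f 1 N (fun n => a (Nat.mul n l)) < 1 / Rpower (INR N) (1 + eps).
Proof.
move=> alpha alpha_gt1.
have [eps [nu [eps_gt0 many_primes]]] := many_primes_between alpha_gt1.
exists eps, nu; split => // N /ssrnat.leP le_nu_N /ssrnat.leP N_gt0.
have [K [K_lt size_gt]] := many_primes N le_nu_N N_gt0.
set X := Rpower (INR N) (1 + eps) in size_gt *.
have X_gt0 : 0 < X by apply: exp_pos.
have a_ge0 m : (0 < m)%N -> (0 <= a m)%R by move/ssrnat.leP/Ha_nonneg/RleP.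
have [p] : exists2 p, p \in primes_between N K &
    (sum_f 1 N (fun n => a (n * p)%N) < 1 / X)%R.
  apply: has_lt_of_sum_lt; rewrite (eq_bigr _ (fun p _ => sum_f1E _ N_gt0)).
  apply: le_lt_trans (sum_multiples_of_primes_le a_ge0 (uniq_primes_between N K) _) _.
    by move=> p; rewrite mem_primes_between; apply.
  apply: le_lt_trans (sum_upto_le_one _ Ha_sum) _.
  rewrite mulrA mulr1 ltr_pdivlMr ?mul1r; last exact/RltP.
  by rewrite -INRE; apply/RltP.
rewrite mem_primes_between => /and3P[p_prime lt_N_p le_p_K] /RltP sum_lt.
exists p; split; first exact/ssrnat.leP/prime_gt0.
split => //; apply: Rle_lt_trans K_lt; exact/le_INR/ssrnat.leP.
Qed.
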